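(* Let $\Gamma$ be a $\mathbb{D}_n$-symmetric billiard curve and let $H=\langle\rho,\sigma\rangle\subset\mathbb{D}_n$ be a dihedral subgroup of order $4$, generated by a rotation $\rho$ of order $2$ and a reflection $\sigma$. Let $z\in\Gamma^{\mathbb{Z}}$ be a billiard sequence of minimal period $p\ge3$ with spatiotemporal symmetry group $H(z)=H$. Then $p$ is even and exactly one of the following holds: - (I) $\rho(z_i)=z_{p/2+i}$ for all $i$, and $\sigma(z_i)=z_{k-i}$ for all $i$ for a unique $0\le k<p$. - (II) $\rho(z_i)=z_{k-i}$ for all $i$ for a unique odd $0<k<p$, and either $\sigma(z_i)=z_{p/2+i}$ for all $i$ or $(\rho\sigma)(z_i)=z_{p/2+i}$ for all $i$.
   Context: $\mathbb{D}_n=\langle R,S\rangle$, where $R$ is rotation by $2\pi/n$ and $S$ is the horizontal reflection. A $\mathbb{D}_n$-symmetric billiard curve is a $C^2$ simple closed $\mathbb{D}_n$-invariant curve bounding a strictly convex domain. A billiard sequence is $z\in\Gamma^{\mathbb{Z}}$ with $z_i\ne z_{i+1}$. $H(z)$ is the set of $h\in\mathbb{D}_n$ for which there is $k\in\mathbb{Z}$ with $h(z_i)=z_{k+i}$ for all $i$ or $h(z_i)=z_{k-i}$ for all $i$. *)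

From HB Require Import structures.
From mathcomp Require Import all_boot all_order all_algebra.
From mathcomp Require Import all_classical all_reals all_analysis.
Set Implicit Arguments. Unset Strict Implicit. Unset Printing Implicit Defensive.
Import Order.TTheory GRing.Theory Num.Theory.
Import numFieldNormedType.Exports.
Local Open Scope classical_set_scope.
Local Open Scope ring_scope.

Definition pt (R : realType) := (R * R)%type.

Definition rotp (R : realType) (a : R) (q : pt R) : pt R :=
  (cos a * q.1 - sin a * q.2, sin a * q.1 + cos a * q.2).

Definition rotD (R : realType) (n j : nat) : pt R -> pt R :=
  rotp (2 * pi * j%:R / n%:R).

Definition reflS (R : realType) (q : pt R) : pt R := (q.1, - q.2).

Definition Dn (R : realType) (n : nat) : set (pt R -> pt R) :=
  [set g | exists j : nat, exists b : bool,
     g = rotD (R:=R) n j \o (if b then reflS (R:=R) else id)].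

Definition is_rotation (R : realType) (n : nat) (g : pt R -> pt R) : Prop :=
  exists j : nat, g = rotD (R:=R) n j.

Definition is_reflection (R : realType) (n : nat) (g : pt R -> pt R) : Prop :=
  exists j : nat, g = rotD (R:=R) n j \o reflS (R:=R).

Definition order2 (R : realType) (g : pt R -> pt R) : Prop :=
  g \o g = id /\ g <> id.

(* The subgroup generated by a and b: the smallest set of maps containing
   id, a, b and closed under composition (in the finite group D_n this is
   the generated subgroup). *)
Inductive gen2 (R : realType) (a b : pt R -> pt R) : (pt R -> pt R) -> Prop :=
  | gen2_id : gen2 a b id
  | gen2_a : gen2 a b a
  | gen2_b : gen2 a b b
  | gen2_comp : forall f g, gen2 a b f -> gen2 a b g -> gen2 a b (f \o g).

Definition gen_subgroup (R : realType) (a b : pt R -> pt R) : set (pt R -> pt R) :=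
  [set g | gen2 a b g].

Definition cmb (R : realType) (t : R) (a b : pt R) : pt R :=
  (t * a.1 + (1 - t) * b.1, t * a.2 + (1 - t) * b.2).

Definition strictly_convex (R : realType) (K : set (pt R)) : Prop :=
  forall a b, K a -> K b -> a <> b ->
    forall t : R, 0 < t < 1 -> (interior K) (cmb t a b).

Definition C2 (R : realType) (f : R -> R) : Prop :=
  (forall t, derivable f t 1) /\ (forall t, derivable (derive1 f) t 1) /\
  continuous (derive1 (derive1 f)).

Definition C2_simple_closed_curve (R : realType) (G : set (pt R)) : Prop :=
  exists (x y : R -> R) (L : R), 0 < L /\ C2 x /\ C2 y /\
    (forall t, x (t + L) = x t /\ y (t + L) = y t) /\
    (forall s t, 0 <= s < L -> 0 <= t < L -> (x s, y s) = (x t, y t) -> s = t) /\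
    (forall t, (derive1 x t, derive1 y t) <> (0, 0)) /\
    G = [set (x t, y t) | t in `[0, L[%classic].

Definition Dn_billiard_curve (R : realType) (n : nat) (G : set (pt R)) : Prop :=
  C2_simple_closed_curve G /\
  (exists K : set (pt R), compact K /\ strictly_convex K /\
      G = closure K `\` interior K) /\
  (forall g, Dn (R:=R) n g -> g @` G = G).

Definition billiard_seq (R : realType) (G : set (pt R)) (z : int -> pt R) : Prop :=
  (forall i, G (z i)) /\ (forall i, z i <> z (i + 1)%R).

Definition minimal_period (R : realType) (z : int -> pt R) (p : nat) : Prop :=
  (0 < p)%N /\ (forall i, z (i + p%:Z)%R = z i) /\
  (forall q : nat, (0 < q < p)%N -> ~ (forall i, z (i + q%:Z)%R = z i)).

Definition Hsym (R : realType) (n : nat) (z : int -> pt R) : set (pt R -> pt R) :=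
  [set h | Dn (R:=R) n h /\ exists k : int,
     (forall i, h (z i) = z (k + i)%R) \/ (forall i, h (z i) = z (k - i)%R)].

(* The order-2 rotation rho is the antipodal map q |-> -q, and sigma is a
   reflection in a line through the origin.  The boundary of a strictly
   convex set contains no point strictly inside one of its chords; applied to
   the chord from z_i to -z_i this shows that the only points of the curve on
   the line through 0 and z_i are z_i and -z_i.  Hence rho fixes no z_i, and
   no reflection fixes all of them.  An involution acting on z as a time
   shift by d has 2d, but not d, divisible by p: p is even and the shift is
   p/2.  An involution acting as a time reversal z_i |-> z_(k-i) without
   fixed points forces k odd and p even.  Running through the two possible
   actions of rho, and the actions of sigma and rho sigma they leave open,
   gives the two cases; two distinct elements of H cannot both act as the
   half-period shift, since their quotient would then fix every z_i. *)
From Pilot Require Import Defs.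
From HB Require Import structures.
From mathcomp Require Import all_boot all_order all_algebra.
From mathcomp Require Import all_classical all_reals all_analysis.
From mathcomp Require Import zify ring lra.
Import Order.TTheory GRing.Theory Num.Theory.
Import numFieldNormedType.Exports.
Set Implicit Arguments. Unset Strict Implicit. Unset Printing Implicit Defensive.
Local Open Scope classical_set_scope.
Local Open Scope ring_scope.

Section PlaneMaps.
Variable R : realType.
Implicit Types (a c s : R) (q u v : pt R).

(* [reflp (cos a) (sin a)] is [rotp a \o reflS], the reflection in the line
   through 0 at angle a/2. *)
Definition reflp c s q : pt R := (c * q.1 + s * q.2, s * q.1 - c * q.2).

Definition cross u v : R := u.1 * v.2 - u.2 * v.1.

Lemma opp_pairE (x y : R) : - (x, y) = (- x, - y) :> pt R.
Proof. by []. Qed.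

Lemma pt_opp_neq q : q <> 0 -> - q <> q.
Proof.
case: q => x y nz e; have [ex ey] : - x = x /\ - y = y by case: e.
apply: nz; have -> : x = 0 by lra.
by have -> : y = 0 by lra.
Qed.

Lemma cmb_opp c q : cmb ((1 + c) / 2) q (- q) = c *: q.
Proof.
change ((1 + c) / 2 *: q + (1 - (1 + c) / 2) *: - q = c *: q).
by rewrite scalerN -scalerBl; congr (_ *: _); lra.
Qed.

Lemma rotp_order2 a : order2 (rotp a) -> forall q, rotp a q = - q.
Proof.
case=> rot2 rot_neq.
have := congr1 (fun f => f (1, 0)) rot2; have := congr1 (fun f => f (0, 1)) rot2.
rewrite /= /rotp /=; set c := cos a; set s := sin a.
case=> h1 h2 [h3 h4].
have s0 : s = 0.
  have /eqP : s * c = 0 by nra.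
  rewrite mulf_eq0 => /orP[/eqP // | /eqP c0]; rewrite c0 in h4; nra.
rewrite s0 in h1 h2 h3 h4.
have [c1 | cN1] : c = 1 \/ c = -1.
  have /eqP : (c - 1) * (c + 1) = 0 by nra.
  by rewrite mulf_eq0 => /orP[/eqP h | /eqP h]; [left | right]; lra.
- exfalso; apply: rot_neq; apply: funext => -[x y].
  by rewrite /rotp -/c -/s c1 s0 /=; congr pair; ring.
- by move=> [x y]; rewrite /rotp -/c -/s cN1 s0 opp_pairE /=; congr pair; ring.
Qed.

Lemma rotation_order2_opp n (rho : pt R -> pt R) :
  is_rotation n rho -> order2 rho -> forall q, rho q = - q.
Proof. by case=> j ->; exact: rotp_order2. Qed.

Lemma reflection_reflp n (sigma : pt R -> pt R) : is_reflection n sigma ->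
  exists c s, c ^+ 2 + s ^+ 2 = 1 /\ forall q, sigma q = reflp c s q.
Proof.
case=> j ->; exists (cos (2 * pi * j%:R / n%:R)), (sin (2 * pi * j%:R / n%:R)).
split; first exact: cos2Dsin2.
by move=> [x y]; rewrite /= /Defs.rotD /rotp /reflS /reflp /=; congr pair; ring.
Qed.

Lemma reflpK c s : c ^+ 2 + s ^+ 2 = 1 -> involutive (reflp c s).
Proof.
by move=> cs [x y]; rewrite /reflp /=; congr pair; rewrite -[RHS]mul1r -cs; ring.
Qed.

Lemma reflpN c s q : reflp c s (- q) = - reflp c s q.
Proof. by case: q => x y; rewrite /reflp !opp_pairE /=; congr pair; ring. Qed.

Lemma oppr_reflp c s q : - reflp c s q = reflp (- c) (- s) q.
Proof. by case: q => x y; rewrite /reflp !opp_pairE /=; congr pair; ring. Qed.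

(* Both fixed points lie on the mirror, a line through the origin. *)
Lemma reflp_fixed_cross c s u v :
  reflp c s u = u -> reflp c s v = v -> cross u v = 0.
Proof.
case: u v => x y [u v]; rewrite /reflp /cross /= => -[e1 e2] [e3 e4].
have [c1 | c1] := eqVneq (c - 1) 0; last first.
  apply: (mulfI c1); rewrite mulr0.
  have -> : (c - 1) * (x * v - y * u)
          = v * (c * x + s * y - x) - y * (c * u + s * v - u) by ring.
  by rewrite e1 e3 !subrr !mulr0 subrr.
have [s0 | s0] := eqVneq s 0; last first.
  apply: (mulfI s0); rewrite mulr0.
  have -> : s * (x * v - y * u)
          = v * (s * x - c * y - y) - y * (s * u - c * v - v) by ring.
  by rewrite e2 e4 !subrr !mulr0 subrr.
have c1' : c = 1 by lra.
rewrite c1' s0 in e2 e4.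
have y0 : y = 0 by lra.
have v0 : v = 0 by lra.
by rewrite y0 v0 mulr0 mul0r subrr.
Qed.

Lemma cross_eq0_scale u v : u <> 0 -> cross u v = 0 -> exists mu : R, v = mu *: u.
Proof.
case: u v => x y [a b] u0; rewrite /cross /= => hc.
have n0 : x ^+ 2 + y ^+ 2 != 0.
  apply/eqP => n0; apply: u0.
  have -> : x = 0 by nra.
  by have -> : y = 0 by nra.
have scaleE (k r : R) : k *: r = k * r by [].
exists ((x * a + y * b) / (x ^+ 2 + y ^+ 2)); congr pair; rewrite /= scaleE mulrAC.
- have -> : (x * a + y * b) * x = a * (x ^+ 2 + y ^+ 2) + y * (x * b - y * a) by ring.
  by rewrite hc mulr0 addr0 mulfK.
- have -> : (x * a + y * b) * y = b * (x ^+ 2 + y ^+ 2) - x * (x * b - y * a) by ring.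
  by rewrite hc mulr0 subr0 mulfK.
Qed.

End PlaneMaps.

Definition chord_free (R : realType) (G : set (pt R)) : Prop :=
  forall a b t, G a -> G b -> a <> b -> 0 < t < 1 -> ~ G (cmb t a b).

Lemma billiard_chord_free (R : realType) n (G : set (pt R)) :
  Dn_billiard_curve n G -> chord_free G.
Proof.
case=> _ [[K [cK [sK ->]]] _] a b t [Ka _] [Kb _] ab t01 [_ notIK].
have clK : closure K = K by apply/esym/closure_id; exact: compact_closed.
rewrite clK in Ka Kb; exact: notIK (sK a b Ka Kb ab t t01).
Qed.

Lemma billiard_rotation_closed (R : realType) n (G : set (pt R)) g q :
  Dn_billiard_curve n G -> is_rotation n g -> G q -> G (g q).
Proof.
case=> _ [_ Dn_sym] [j ->] Gq.
have Dn_rot : Dn n (Defs.rotD (R:=R) n j) by exists j, false.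
by rewrite -(Dn_sym _ Dn_rot); exists q.
Qed.

Section ChordFree.
Variables (R : realType) (G : set (pt R)).
Hypothesis chordG : chord_free G.
Hypothesis Gopp : forall q, G q -> G (- q).

Lemma chord_free_notin0 a b : G a -> G b -> a <> b -> ~ G 0.
Proof.
have mid0 q : G q -> q <> 0 -> ~ G 0.
  move=> Gq q0 G0; apply: (chordG (t := (1 + 0) / 2) Gq (Gopp Gq)).
  - exact/nesym/pt_opp_neq.
  - lra.
  - by rewrite cmb_opp scale0r.
move=> Ga Gb ab; have [a0 | /eqP a0] := eqVneq a 0; last exact: mid0 _ Ga a0.
by apply: (mid0 _ Gb) => b0; apply: ab; rewrite a0 b0.
Qed.

Hypothesis notG0 : ~ G 0.

Lemma chord_free_scale q c : G q -> `|c| < 1 -> ~ G (c *: q).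
Proof.
move=> Gq; rewrite ltr_norml => c1 Gcq.
have q0 : q <> 0 by move=> q0; apply: notG0; rewrite -q0.
apply: (chordG (t := (1 + c) / 2) Gq (Gopp Gq)).
- exact/nesym/pt_opp_neq.
- lra.
- by rewrite cmb_opp.
Qed.

Lemma chord_free_cross u v : G u -> G v -> cross u v = 0 -> v = u \/ v = - u.
Proof.
move=> Gu Gv cross0.
have u0 : u <> 0 by move=> u0; apply: notG0; rewrite -u0.
have [mu vE] := cross_eq0_scale u0 cross0.
have [mu_lt1 | ] := ltrP `|mu| 1.
  by case: (chord_free_scale Gu mu_lt1); rewrite -vE.
rewrite le_eqVlt => /orP[| mu_gt1].
  rewrite eq_sym eqr_norml => /andP[/orP[] /eqP mu1 _]; rewrite vE mu1.
  - by left; rewrite scale1r.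
  - by right; rewrite scaleN1r.
have mu0 : mu != 0 by apply: contraTneq mu_gt1 => ->; rewrite normr0 ltr10.
have uE : u = mu^-1 *: v by rewrite vE scalerA mulVf ?scale1r.
case: (chord_free_scale Gv (c := mu^-1)); last by rewrite -uE.
by rewrite normfV invf_lt1 // (lt_trans ltr01).
Qed.

End ChordFree.

Section PeriodicSequence.
Variables (R : realType) (z : int -> pt R) (p : nat).
Hypothesis zp : minimal_period z p.

Lemma periodMz (m : int) i : z (i + m * p%:Z) = z i.
Proof.
suff zpN (k : nat) j : z (j + k%:Z * p%:Z) = z j.
  case: m => k; first exact: zpN.
  rewrite -(zpN k.+1 (i + Negz k * p%:Z)); congr z; rewrite NegzE; nia.
elim: k j => [|k IHk] j; first by rewrite mul0r addr0.
have -> : j + k.+1%:Z * p%:Z = (j + k%:Z * p%:Z) + p%:Z by nia.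
by rewrite zp.2.1 IHk.
Qed.

Lemma period_dvdz d : (forall i, z (i + d) = z i) -> (p%:Z %| d)%Z.
Proof.
move=> zd; have p0 : (0 < p)%N := zp.1.
have rE := divz_eq d p%:Z; set r := (d %% p%:Z)%Z in rE *.
have r_range : 0 <= r < p%:Z by rewrite /r; lia.
have zr i : z (i + r) = z i.
  rewrite -(periodMz (d %/ p%:Z)%Z (i + r)) -[RHS](zd i); congr z; lia.
apply/dvdz_mod0P; rewrite -/r.
have [// | r_pos] : r = 0 \/ 0 < r by lia.
exfalso; apply: (zp.2.2 `|r|%N); first lia.
by move=> i; rewrite -[RHS](zr i); congr z; lia.
Qed.

Lemma shift_involution_half f d : involutive f ->
  (forall i, f (z i) = z (d + i)) -> ~ (forall i, f (z i) = z i) ->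
  ~~ odd p /\ forall i, f (z i) = z (i + (p %/ 2)%:Z).
Proof.
move=> fK fz f_moves.
have /period_dvdz/dvdzP[m dE] : forall i, z (i + 2 * d) = z i.
  by move=> i; rewrite -[RHS](fK (z i)) !fz; congr z; lia.
have [a [mE | mE]] : exists a, m = 2 * a \/ m = 2 * a + 1 by exists (m %/ 2)%Z; lia.
- exfalso; apply: f_moves => i; rewrite fz -(periodMz a i); congr z; nia.
- have p_even : ~~ odd p by nia.
  split=> // i; rewrite fz -(periodMz a (i + (p %/ 2)%:Z)); congr z; nia.
Qed.

Lemma half_shift_comp f g : ~~ odd p ->
  (forall i, f (z i) = z (i + (p %/ 2)%:Z)) ->
  (forall i, g (z i) = z (i + (p %/ 2)%:Z)) -> forall i, f (g (z i)) = z i.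
Proof.
move=> p_even fz gz i; rewrite gz fz -[RHS](periodMz 1 i); congr z; lia.
Qed.

Lemma reversal_modz f k : (forall i, f (z i) = z (k - i)) ->
  exists k' : nat, [/\ (k' < p)%N, (p%:Z %| k - k'%:Z)%Z &
                       forall i, f (z i) = z (k'%:Z - i)].
Proof.
move=> fz; have p0 : (0 < p)%N := zp.1.
have kE := divz_eq k p%:Z; set r := (k %% p%:Z)%Z in kE *.
have r_range : 0 <= r < p%:Z by rewrite /r; lia.
exists `|r|%N; split.
- lia.
- by apply/dvdzP; exists (k %/ p%:Z)%Z; lia.
- by move=> i; rewrite fz -(periodMz (k %/ p%:Z)%Z (`|r|%N%:Z - i)); congr z; lia.
Qed.

Lemma reversal_index_unique f (k1 k2 : nat) : (k1 < p)%N -> (k2 < p)%N ->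
  (forall i, f (z i) = z (k1%:Z - i)) -> (forall i, f (z i) = z (k2%:Z - i)) ->
  k1 = k2.
Proof.
move=> k1p k2p fz1 fz2.
have /period_dvdz/dvdzP[m mE] : forall i, z (i + (k2%:Z - k1%:Z)) = z i.
  move=> i; have := fz2 (k1%:Z - i); rewrite fz1 => e.
  have -> : i + (k2%:Z - k1%:Z) = k2%:Z - (k1%:Z - i) by lia.
  by rewrite -e; congr z; lia.
suff m0 : m = 0 by move: mE; rewrite m0 mul0r; lia.
nia.
Qed.

Lemma reversal_fixfree f k : (forall i, f (z i) = z (k - i)) ->
  (forall i, f (z i) <> z i) ->
  ~~ odd p /\ exists k' : nat,
    [/\ (0 < k' < p)%N, odd k' & forall i, f (z i) = z (k'%:Z - i)].
Proof.
move=> fz f_fixfree.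
have no_fix i m : k - i <> i + m * p%:Z.
  by move=> e; apply: (f_fixfree i); rewrite fz e periodMz.
have [a kE] : exists a, k = 2 * a + 1.
  exists (k %/ 2)%Z; have [//|e] : k = 2 * (k %/ 2)%Z + 1 \/ k = 2 * (k %/ 2)%Z by lia.
  by exfalso; apply: (no_fix (k %/ 2)%Z 0); lia.
have p_even : ~~ odd p.
  by apply/negP => p_odd; apply: (no_fix (a + (p %/ 2)%:Z + 1) (-1)); lia.
split=> //; have [k' [k'p /dvdzP[m kk'] fk']] := reversal_modz fz.
have [h pE] : exists h : nat, p = (2 * h)%N by exists (p %/ 2)%N; lia.
have k'_odd : odd k'.
  move: kk'; rewrite pE (_ : m * _ = 2 * (m * h%:Z)); last by rewrite PoszM; ring.
  move: (m * h%:Z) => t; lia.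
by exists k'; rewrite odd_gt0.
Qed.

End PeriodicSequence.

Section Classification.
Variables (R : realType) (z : int -> pt R) (p : nat) (rho sigma : pt R -> pt R).
Hypothesis zp : minimal_period z p.
Hypotheses (rhoK : involutive rho) (sigmaK : involutive sigma).
Hypothesis rho_sigmaC : forall q, rho (sigma q) = sigma (rho q).
Hypothesis rho_fixfree : forall i, rho (z i) <> z i.
Hypothesis sigma_moves : ~ (forall i, sigma (z i) = z i).
Hypothesis rho_sigma_moves : ~ (forall i, rho (sigma (z i)) = z i).
Hypothesis sigma_sym : exists m : int,
  (forall i, sigma (z i) = z (m + i)) \/ (forall i, sigma (z i) = z (m - i)).

Definition type_I :=
  (forall i, rho (z i) = z (i + (p %/ 2)%:Z)) /\
  (exists! k : nat, (k < p)%N /\ forall i, sigma (z i) = z (k%:Z - i)).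

Definition type_II :=
  (exists! k : nat, [/\ (0 < k < p)%N, odd k & forall i, rho (z i) = z (k%:Z - i)]) /\
  ((forall i, sigma (z i) = z ((p %/ 2)%:Z + i)) \/
   (forall i, (rho \o sigma) (z i) = z ((p %/ 2)%:Z + i))).

Lemma rho_sigmaK : involutive (rho \o sigma).
Proof. by move=> q; rewrite /= -rho_sigmaC rhoK sigmaK. Qed.

Lemma sigma_half_shift m : (forall i, sigma (z i) = z (m + i)) ->
  forall i, sigma (z i) = z ((p %/ 2)%:Z + i).
Proof.
move=> sigma_shift i.
have [_ sigma_half] := shift_involution_half zp sigmaK sigma_shift sigma_moves.
by rewrite sigma_half addrC.
Qed.

Lemma half_shift_unique : ~~ odd p -> (forall i, rho (z i) = z (i + (p %/ 2)%:Z)) ->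
  ~ ((forall i, sigma (z i) = z ((p %/ 2)%:Z + i)) \/
     (forall i, (rho \o sigma) (z i) = z ((p %/ 2)%:Z + i))).
Proof.
move=> p_even rho_half [sigma_half | rho_sigma_half].
- apply: rho_sigma_moves; apply: (half_shift_comp zp p_even rho_half (g := sigma)) => i.
  by rewrite sigma_half addrC.
- apply: sigma_moves => i; rewrite -[LHS]rhoK.
  by apply: (half_shift_comp zp p_even rho_half (g := rho \o sigma)) => j;
    rewrite rho_sigma_half addrC.
Qed.

Lemma classification_rho_shift k : (forall i, rho (z i) = z (k + i)) ->
  ~~ odd p /\ type_I /\ ~ type_II.
Proof.
move=> rho_shift.
have [p_even rho_half] := shift_involution_half zp rhoK rho_shift
  (fun rho_fix => rho_fixfree (rho_fix 0)).
have not_II : ~ type_II by case=> _; exact: half_shift_unique.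
split=> //; split=> //; split=> //; case: sigma_sym => m [sigma_shift | sigma_rev].
  case: (half_shift_unique p_even rho_half); left.
  exact: sigma_half_shift sigma_shift.
have [k' [k'p _ sigma_k']] := reversal_modz zp sigma_rev.
exists k'; split=> [// | k'' [k''p sigma_k'']].
exact: (reversal_index_unique zp k'p k''p sigma_k' sigma_k'').
Qed.

Lemma classification_rho_reversal k : (forall i, rho (z i) = z (k - i)) ->
  ~~ odd p /\ type_II /\ ~ type_I.
Proof.
move=> rho_rev.
have [p_even [k' [k'_range k'_odd rho_k']]] := reversal_fixfree zp rho_rev rho_fixfree.
have /andP[_ k'p] := k'_range.
have half : (forall i, sigma (z i) = z ((p %/ 2)%:Z + i)) \/
            (forall i, (rho \o sigma) (z i) = z ((p %/ 2)%:Z + i)).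
  case: sigma_sym => m [sigma_shift | sigma_rev].
    by left; exact: sigma_half_shift sigma_shift.
  have rho_sigma_shift i : (rho \o sigma) (z i) = z ((k - m) + i).
    by rewrite /= sigma_rev rho_rev; congr z; lia.
  have [_ rho_sigma_half] :=
    shift_involution_half zp rho_sigmaK rho_sigma_shift rho_sigma_moves.
  by right => i; rewrite rho_sigma_half addrC.
split=> //; split.
  split=> //; exists k'; split=> [| k'' [/andP[_ k''p] _ rho_k'']]; first by split.
  exact: (reversal_index_unique zp k'p k''p rho_k' rho_k'').
by case=> rho_half _; exact: half_shift_unique p_even rho_half half.
Qed.

Hypothesis rho_sym : exists k : int,
  (forall i, rho (z i) = z (k + i)) \/ (forall i, rho (z i) = z (k - i)).

Theorem classification : ~~ odd p /\ (type_I /\ ~ type_II \/ ~ type_I /\ type_II).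
Proof.
have [k [/classification_rho_shift | /classification_rho_reversal]] := rho_sym.
- by case=> p_even [I not_II]; split=> //; left.
- by case=> p_even [II not_I]; split=> //; right.
Qed.

End Classification.

Section BilliardOrbit.
Variables (R : realType) (G : set (pt R)) (z : int -> pt R) (p : nat).
Hypothesis chordG : chord_free G.
Hypothesis Gopp : forall q, G q -> G (- q).
Hypothesis zG : billiard_seq G z.
Hypothesis zp : minimal_period z p.
Hypothesis p_ge3 : (3 <= p)%N.

Lemma billiard_notin0 : ~ G 0.
Proof. exact: (chord_free_notin0 chordG Gopp (zG.1 0) (zG.1 (0 + 1)) (zG.2 0)). Qed.

Lemma billiard_opp_neq i : - z i <> z i.
Proof.
by apply: pt_opp_neq => zi0; apply: billiard_notin0; rewrite -zi0; exact: zG.1.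
Qed.

(* Consecutive fixed points would lie on the mirror, hence be antipodal,
   which makes 2 a period. *)
Lemma billiard_reflp_moves c s : ~ (forall i, reflp c s (z i) = z i).
Proof.
move=> z_fixed.
have zS i : z (i + 1) = - z i.
  have := reflp_fixed_cross (z_fixed i) (z_fixed (i + 1)).
  case/(chord_free_cross chordG Gopp billiard_notin0 (zG.1 i) (zG.1 (i + 1))) => // zS.
  by case: (zG.2 i).
apply: (zp.2.2 2); first lia.
by move=> i; rewrite (_ : i + 2%:Z = (i + 1) + 1) ?zS ?opprK //; lia.
Qed.

End BilliardOrbit.

Unset Implicit Arguments.

Theorem mainTheorem10 (R : realType) (n : nat) (G : set (pt R))
  (rho sigma : pt R -> pt R) (z : int -> pt R) (p : nat) :
  (0 < n)%N ->
  Dn_billiard_curve n G ->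
  is_rotation n rho -> order2 rho ->
  is_reflection n sigma ->
  billiard_seq G z ->
  minimal_period z p -> (3 <= p)%N ->
  Hsym n z = gen_subgroup rho sigma ->
  ~~ odd p /\
  let I := (forall i, rho (z i) = z (i + (p %/ 2)%:Z)) /\
           (exists! k : nat, (k < p)%N /\
              forall i, sigma (z i) = z (k%:Z - i)) in
  let II := (exists! k : nat, [/\ (0 < k < p)%N, odd k &
              forall i, rho (z i) = z (k%:Z - i)]) /\
            ((forall i, sigma (z i) = z ((p %/ 2)%:Z + i)) \/
             (forall i, (rho \o sigma) (z i) = z ((p %/ 2)%:Z + i))) in
  (I /\ ~ II) \/ (~ I /\ II).
Proof.
move=> _ billiardG rho_rot rho_ord2 sigma_refl zG zp p_ge3 HzE.
have rho_opp := rotation_order2_opp rho_rot rho_ord2.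
have [c [s [cs sigmaE]]] := reflection_reflp sigma_refl.
have chordG := billiard_chord_free billiardG.
have Gopp q : G q -> G (- q).
  by rewrite -rho_opp; exact: billiard_rotation_closed billiardG rho_rot.
have H_acts h : gen2 rho sigma h -> exists k : int,
    (forall i, h (z i) = z (k + i)) \/ (forall i, h (z i) = z (k - i)).
  by move=> gh; have [] : Hsym n z h by rewrite HzE.
have rhoK : involutive rho by move=> q; rewrite !rho_opp opprK.
have sigmaK : involutive sigma by move=> q; rewrite !sigmaE reflpK.
have rho_sigmaC q : rho (sigma q) = sigma (rho q) by rewrite !rho_opp !sigmaE reflpN.
have rho_fixfree i : rho (z i) <> z i.
  by rewrite rho_opp; exact: (billiard_opp_neq chordG Gopp zG).
have reflp_moves := billiard_reflp_moves chordG Gopp zG zp p_ge3.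
have sigma_moves : ~ (forall i, sigma (z i) = z i).
  by move=> sigma_fix; apply: (reflp_moves c s) => i; rewrite -sigmaE sigma_fix.
have rho_sigma_moves : ~ (forall i, rho (sigma (z i)) = z i).
  move=> rho_sigma_fix; apply: (reflp_moves (- c) (- s)) => i.
  by rewrite -oppr_reflp -sigmaE -rho_opp rho_sigma_fix.
exact: (classification zp rhoK sigmaK rho_sigmaC rho_fixfree sigma_moves
  rho_sigma_moves (H_acts _ (gen2_b rho sigma)) (H_acts _ (gen2_a rho sigma))).
Qed.
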